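(* The position operators $G_i=A_i+A_i^\dagger$, $i\geq1$, are monotone independent with respect to the vacuum state $\omega_\Omega(X)=\langle \Omega,X\Omega\rangle$ on the bounded operators on $\mathfrak F_{WM}(\mathcal H)$: if $\mathcal C_i$ denotes the non-unital $*$-algebra generated by $G_i$ (polynomials in $G_i$ without constant term), then (M1) for $i<j>k$ and $p_i\in\mathcal C_i,p_j\in\mathcal C_j,p_k\in\mathcal C_k$ one has $p_ip_jp_k=\omega_\Omega(p_j)p_ip_k$, and (M2) for $j_1>\cdots>j_k<\cdots<j_n$ and $p_{j_m}\in\mathcal C_{j_m}$ one has $\omega_\Omega(p_{j_1}\cdots p_{j_n})=\prod_{m=1}^n\omega_\Omega(p_{j_m})$.
   Context: Let $\mathcal H$ be a separable Hilbert space with a fixed orthonormal basis $\{e_i: i\geq 1\}$, and $\mathfrak F(\mathcal H)=\bigoplus_{n\ge 0}\mathcal H^{\otimes n}$ its full Fock space with vacuum vector $\Omega$. The weakly monotone Fock space $\mathfrak F_{WM}(\mathcal H)$ is the closed subspace of $\mathfrak F(\mathcal H)$ spanned by $\Omega$ and all simple tensors $e_{i_k}\otimes e_{i_{k-1}}\otimes\cdots\otimes e_{i_1}$ with $k\geq 1$ and $i_k\geq i_{k-1}\geq\cdots\geq i_1$. For $i\geq1$ the weakly monotone annihilation operator $A_i$ and creation operator $A_i^\dagger$ are the bounded operators on $\mathfrak F_{WM}(\mathcal H)$ defined on this spanning set by $A_i\Omega=0$, $A_i(e_{i_k}\otimes\cdots\otimes e_{i_1})=\delta_{i,i_k}\,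 e_{i_{k-1}}\otimes\cdots\otimes e_{i_1}$ (interpreted as $\delta_{i,i_1}\Omega$ when $k=1$), $A_i^\dagger\Omega=e_i$, and $A_i^\dagger(e_{i_k}\otimes\cdots\otimes e_{i_1})=e_i\otimes e_{i_k}\otimes\cdots\otimes e_{i_1}$ if $i\geq i_k$ and $=0$ if $i<i_k$. They are mutually adjoint, of norm one. The position operators are $G_i:=A_i+A_i^\dagger$ (self-adjoint). *)

From HB Require Import structures.
From mathcomp Require Import all_boot all_order all_algebra.
Set Implicit Arguments. Unset Strict Implicit. Unset Printing Implicit Defensive.
Import Order.TTheory GRing.Theory Num.Theory.
Local Open Scope ring_scope.

(* Basis of the weakly monotone Fock space: the word [:: i_k; ...; i_1]
   stands for e_{i_k} (x) ... (x) e_{i_1}; the empty word is the vacuum Omega. *)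
Definition wm_word (w : seq nat) : bool :=
  all (fun x => 0 < x)%N w && sorted (fun a b => b <= a)%N w.

(* Vectors are given by their coefficients on the basis words
   (only coefficients of valid words are ever read or produced). *)
Definition vec (R : numClosedFieldType) := seq nat -> R.

Definition basisv (R : numClosedFieldType) (w : seq nat) : vec R :=
  fun u => if u == w then 1 else 0.

Definition vacuum (R : numClosedFieldType) : vec R := basisv R [::].

Definition ann (R : numClosedFieldType) (i : nat) (v : vec R) : vec R :=
  fun w => if wm_word (i :: w) then v (i :: w) else 0.

Definition cre (R : numClosedFieldType) (i : nat) (v : vec R) : vec R :=
  fun u => match u with
           | [::] => 0
           | i' :: w => if (i' == i) && wm_word u then v w else 0
           end.

Definition posop (R : numClosedFieldType) (i : nat) (v : vec R) : vec R :=
  fun w => ann i v w + cre i v w.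

Definition poly_op (R : numClosedFieldType) (p : {poly R}) (i : nat)
  (v : vec R) : vec R :=
  fun w => \sum_(n < size p) p`_n * iter n (posop i) v w.

Definition no_const (R : numClosedFieldType) (p : {poly R}) : bool :=
  p`_0 == 0.

Definition omega (R : numClosedFieldType) (X : vec R -> vec R) : R :=
  X (vacuum R) [::].

(* product p_{j_1} ... p_{j_n} (as operator, first factor outermost) *)
Definition prod_op (R : numClosedFieldType) (jps : seq (nat * {poly R}))
  (v : vec R) : vec R :=
  foldr (fun jp u => poly_op jp.2 jp.1 u) v jps.

From HB Require Import structures.
From mathcomp Require Import all_boot all_order all_algebra.
From Stdlib Require Import FunctionalExtensionality.
Import Order.TTheory GRing.Theory Num.Theory.
Set Implicit Arguments. Unset Strict Implicit.
Local Open Scope ring_scope.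

(* Let [v] be supported on words whose first letter is below [j].  On a word
   [j^c r] with [r] not led by [j], the operator [G_j] only moves the
   [j]-prefix, exactly as on [j^c], so [(p(G_j) v)(u) = omega(p(G_j)) v(u)]
   whenever [u] is not led by [j].  Since [G_i] with [i < j] never reads
   coefficients on words led by [j], an inner factor [p(G_j)] can be replaced
   by the scalar [omega(p(G_j))] below any [p(G_i)] with [i < j]: this is (M1),
   and it absorbs the increasing tail of a product in (M2) from the inside,
   while the decreasing head is peeled off from the outside. *)

Lemma wm_cons a s : wm_word (a :: s) =
  [&& (0 < a)%N, wm_word s & (if s is b :: _ then (b <= a)%N else true)].
Proof.
rewrite /wm_word /=; case: s => [|b s] /=; first by rewrite !andbT.
by case: (0 < a)%N; case: (0 < b)%N; case: (b <= a)%N; case: (all _ _); case: (path _ _ _).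
Qed.

Lemma wm_nseq_cat j c r : wm_word r -> (if r is b :: _ then (b <= j)%N else true) ->
  wm_word (nseq c j ++ r) = wm_word (nseq c j).
Proof.
move=> wr hr; elim: c => [|c IH] //=.
rewrite !wm_cons IH; case: c {IH} => [|c] //=.
by case: r wr hr => [|b r] //= _ ->.
Qed.

Definition led_by (j : nat) (u : seq nat) : bool :=
  if u is a :: _ then a == j else false.

Section WeaklyMonotoneFock.
Variable R : numClosedFieldType.
Implicit Types (v f g : vec R) (p : {poly R}).

Definition scalev (a : R) v : vec R := fun u => a * v u.

Definition supported_below (j : nat) v :=
  (forall u, ~~ wm_word u -> v u = 0) /\ (forall a u, (j <= a)%N -> v (a :: u) = 0).

Lemma vacuum_supported_below j : supported_below j (vacuum R).
Proof. by split=> [[|a u]|a u] //=; rewrite /vacuum /basisv. Qed.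

Lemma posop_notwm i f u : ~~ wm_word u -> posop i f u = 0.
Proof.
move=> hu; rewrite /posop /ann /cre wm_cons (negbTE hu) andbF add0r.
by case: u {hu} => [|i' w] //; rewrite andbF.
Qed.

Lemma posop_cons_gt i f a u : (i < a)%N -> posop i f (a :: u) = 0.
Proof.
move=> hia; rewrite /posop /ann /cre wm_cons /= [(a <= i)%N]leqNgt hia !andbF add0r.
by rewrite gtn_eqF.
Qed.

Lemma poly_op_eq0 p i f u : no_const p ->
  (forall g, posop i g u = 0) -> poly_op p i f u = 0.
Proof.
move=> /eqP p0 hu; rewrite /poly_op big1 // => -[[|n] ?] _ /=.
  by rewrite p0 mul0r.
by rewrite hu mulr0.
Qed.

Lemma poly_op_supported_below p i j f : no_const p -> (i < j)%N ->
  supported_below j (poly_op p i f).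
Proof.
move=> p0 hij; split=> [u hu|a u hja]; apply: poly_op_eq0 => // g.
  exact: posop_notwm.
exact/posop_cons_gt/(leq_trans hij).
Qed.

Lemma posop_eq_off_led i j v v' : (i < j)%N ->
  (forall u, ~~ led_by j u -> v u = v' u) -> posop i v = posop i v'.
Proof.
move=> hij hv; apply: functional_extensionality => w.
rewrite /posop /ann /cre hv /=; last by rewrite ltn_eqF.
congr (_ + _); case: w => [|i' w] //.
case: ifP => // /andP [/eqP -> hw]; rewrite hv //.
move: hw; rewrite wm_cons; case: w => [|b w] //= /and3P [_ _ hb].
by rewrite ltn_eqF // (leq_ltn_trans hb hij).
Qed.

Lemma poly_op_eq_off_led p i j v v' : no_const p -> (i < j)%N ->
  (forall u, ~~ led_by j u -> v u = v' u) -> poly_op p i v = poly_op p i v'.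
Proof.
move=> /eqP p0 hij hv; apply: functional_extensionality => w.
rewrite /poly_op; apply: eq_bigr => -[[|n] ?] _; first by rewrite /= p0 !mul0r.
by rewrite !iterSr (posop_eq_off_led hij hv).
Qed.

Lemma posop_scalev i a v : posop i (scalev a v) = scalev a (posop i v).
Proof.
apply: functional_extensionality => w; rewrite /posop /ann /cre /scalev mulrDr.
by congr (_ + _); [|case: w => [|? ?]]; rewrite ?mulr0 //; case: ifP; rewrite ?mulr0.
Qed.

Lemma poly_op_scalev p i a v : poly_op p i (scalev a v) = scalev a (poly_op p i v).
Proof.
have iterZ n : iter n (posop i) (scalev a v) = scalev a (iter n (posop i) v).
  by elim: n => //= n ->; rewrite posop_scalev.
apply: functional_extensionality => w; rewrite /poly_op /scalev mulr_sumr.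
by apply: eq_bigr => n _; rewrite iterZ mulrCA.
Qed.

Lemma if_mulr (b b' : bool) (y x : R) : x = 0 \/ b = b' ->
  (if b then y * x else 0) = (if b' then y else 0) * x.
Proof. by case=> [->|->]; case: ifP; rewrite ?mulr0 ?mul0r. Qed.

(* Here [x] stands for [v r]: appending [r] can only change the validity of a
   word when [v r = 0]. *)
Lemma posop_nseq_cat j f g r x : ~~ led_by j r ->
  (forall d, x = 0 \/ wm_word (nseq d j ++ r) = wm_word (nseq d j)) ->
  (forall d, f (nseq d j ++ r) = g (nseq d j) * x) ->
  forall c, posop j f (nseq c j ++ r) = posop j g (nseq c j) * x.
Proof.
move=> hr hwm hf c; rewrite /posop /ann /cre mulrDl.
congr (_ + _); first by rewrite -[j :: _]/(nseq c.+1 j ++ r) hf; exact: if_mulr (hwm _).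
case: c => [|c] /=.
  by case: r hr {hf hwm} => [|a r] /= => [|/negbTE ->]; rewrite mul0r.
by rewrite eqxx /= -[j :: _ ++ r]/(nseq c.+1 j ++ r) hf; exact: if_mulr (hwm _).
Qed.

Lemma iter_posop_nseq_cat j v r n c : supported_below j v -> ~~ led_by j r ->
  iter n (posop j) v (nseq c j ++ r) = iter n (posop j) (vacuum R) (nseq c j) * v r.
Proof.
move=> [v_wm v_below] hr.
have hwm d : v r = 0 \/ wm_word (nseq d j ++ r) = wm_word (nseq d j).
  have [|vr] := eqVneq (v r) 0; [by left | right].
  apply: wm_nseq_cat; first by apply: contraNT vr => /v_wm ->.
  case: r hr vr => [|b r] // _ vr; rewrite leqNgt.
  by apply: contra vr => /ltnW /v_below ->.
elim: n c => [|n IH] c /=; last exact: posop_nseq_cat.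
case: c => [|c] /=; first by rewrite /vacuum /basisv eqxx mul1r.
by rewrite v_below // mul0r.
Qed.

Lemma poly_op_off_led p j v u : supported_below j v -> ~~ led_by j u ->
  poly_op p j v u = omega (poly_op p j) * v u.
Proof.
move=> hv hu; rewrite /poly_op /omega mulr_suml; apply: eq_bigr => n _.
by rewrite -mulrA -(iter_posop_nseq_cat n 0 hv hu).
Qed.

Lemma poly_op_absorb pi pj i j v : no_const pi -> (i < j)%N -> supported_below j v ->
  poly_op pi i (poly_op pj j v) = scalev (omega (poly_op pj j)) (poly_op pi i v).
Proof.
move=> pi0 hij hv; rewrite -poly_op_scalev.
by apply: (poly_op_eq_off_led pi0 hij) => u hu; rewrite poly_op_off_led.
Qed.

Definition factors_no_const (L : seq (nat * {poly R})) := all (fun jp => no_const jp.2) L.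

Lemma prod_op_increasing j p L :
  sorted (fun a b => a < b)%N (j :: unzip1 L) -> factors_no_const ((j, p) :: L) ->
  prod_op ((j, p) :: L) (vacuum R)
  = scalev (\prod_(jp <- L) omega (poly_op jp.2 jp.1)) (poly_op p j (vacuum R)).
Proof.
elim: L j p => [|[j' p'] L IH] j p.
  by move=> _ _; apply: functional_extensionality => u; rewrite /scalev big_nil mul1r.
move=> hs0 hL0.
have /andP [hjj' hs] : (j < j')%N && sorted (fun a b => a < b)%N (j' :: unzip1 L) := hs0.
have /andP [p0 hL] : no_const p && factors_no_const ((j', p') :: L) := hL0.
rewrite -[prod_op _ _]/(poly_op p j (prod_op ((j', p') :: L) (vacuum R))).
rewrite (IH j' p' hs hL) poly_op_scalev (poly_op_absorb p' p0 hjj' (vacuum_supported_below j')).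
apply: functional_extensionality => u.
by rewrite /scalev big_cons mulrA [_ * omega _]mulrC.
Qed.

Lemma omega_prod_op_valley L k : (0 < k <= size L)%N ->
  sorted (fun a b => b < a)%N (take k (unzip1 L)) ->
  sorted (fun a b => a < b)%N (drop k.-1 (unzip1 L)) ->
  factors_no_const L ->
  omega (prod_op L) = \prod_(jp <- L) omega (poly_op jp.2 jp.1).
Proof.
elim: L k => [|[j p] L IH] [|[|k]] // hk hdec hinc hL.
  by rewrite /omega (prod_op_increasing hinc hL) /scalev big_cons mulrC.
case: L IH hk hdec hinc hL => [|[j2 p2] L] IH // hk hdec0 hinc hL0.
have /andP [hj2j hdec] :
  (j2 < j)%N && sorted (fun a b => b < a)%N (take k.+1 (unzip1 ((j2, p2) :: L))) := hdec0.
have /andP [_ hL] : no_const p && factors_no_const ((j2, p2) :: L) := hL0.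
have /andP [p20 _] := hL.
have hv := poly_op_supported_below (prod_op L (vacuum R)) p20 hj2j.
rewrite /omega -[prod_op ((j, p) :: _) _]/(poly_op p j (prod_op ((j2, p2) :: L) (vacuum R))).
by rewrite (poly_op_off_led _ hv) // big_cons -(IH k.+1).
Qed.

End WeaklyMonotoneFock.

Theorem corollary2p3 (R : numClosedFieldType) :
  (* (M1) *)
  (forall (i j k : nat) (pi pj pk : {poly R}),
      (0 < i)%N -> (0 < j)%N -> (0 < k)%N -> (i < j)%N -> (k < j)%N ->
      no_const pi -> no_const pj -> no_const pk ->
      forall w : seq nat, wm_word w ->
        poly_op pi i (poly_op pj j (poly_op pk k (basisv R w)))
        = (fun u => omega (poly_op pj j) * poly_op pi i (poly_op pk k (basisv R w)) u))
  /\
  (* (M2) *)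
  (forall (js : seq nat) (ps : seq {poly R}) (k : nat),
      size ps = size js ->
      all (fun j => 0 < j)%N js ->
      all (@no_const R) ps ->
      (0 < k <= size js)%N ->
      sorted (fun a b => b < a)%N (take k js) ->
      sorted (fun a b => a < b)%N (drop k.-1 js) ->
      omega (prod_op (zip js ps))
      = \prod_(jp <- zip js ps) omega (poly_op jp.2 jp.1)).
Proof.
split=> [i j k pi pj pk _ _ _ hij hkj pi0 _ pk0 w _ | js ps k hs _ hps hk hdec hinc].
  exact/poly_op_absorb/poly_op_supported_below.
have js_eq : unzip1 (zip js ps) = js by rewrite unzip1_zip // hs.
have ps_eq : unzip2 (zip js ps) = ps by rewrite unzip2_zip // hs.
apply: (omega_prod_op_valley (k := k)); rewrite ?js_eq ?size_zip ?hs ?minnn //.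
by rewrite /factors_no_const -ps_eq all_map in hps.
Qed.
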